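(* Assume the setting in the context, with a decomposition of $\mathcal X$ over $A$, a cost function $g\in\mathcal G_s$ and $\alpha\in(0,1)$. Then $\{(A,\rho_i\circ B,g,\alpha)\}_{i\in\mathcal I}$ is a decomposition (in the sense of Definition 2) of $(A,B,g,\alpha)$ if and only if for every choice of optimal control laws $u_i^*$ of the subproblems $(A,\rho_i\circ B,g,\alpha)$, $i\in\mathcal I$, there exists an optimal control law $u^*$ of $(A,B,g,\alpha)$ such that $$\rho_i\big(Ax+Bu^*(x)\big)=A\rho_i(x)+\rho_i\big(Bu_i^*(\rho_i(x))\big)\qquad\forall x\in\mathcal X,\ \forall i\in\mathcal I.$$
   Context: Let $\mathcal F$ be a field and $\mathcal X,\mathcal U$ finite-dimensional vector spaces over $\mathcal F$. Let $A:\mathcal X\to\mathcal X$ and $B:\mathcal U\to\mathcal X$ be linear maps with $B$ injective, and consider the system $x_{t+1}=Ax_t+Bu_t$ and a cost $g:\mathcal X\to\mathbb R_{\ge 0}$ with $g(x)=0\iff x=0$. Standing assumption: all minima appearing below are attained. Infinite-horizon problem $(A,B,g,\alpha)$: policies $\pi(x_0)=(\pi_t(x_0))_{t\in\mathbb Z_+}\in\mathcal U^{\mathbb Z_+}$, cost $J(x_0,\pi)=\sum_{t\ge0}\alpha^tg(x_t)$ with $x_{t+1}=Ax_t+B\pi_t(x_0)$; $J^*(x_0)=\min_\pi J(x_0,\pi)$, which satisfies $J^*(x)=g(x)+\alpha\min_uJ^*(Ax+Bu)$. An optimal control law of $(A,B,g,\alpha)$ is a map $u^*:\mathcal X\to\mathcal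 U$ with $u^*(x)\in\operatorname{argmin}_{u\in\mathcal U}J^*(Ax+Bu)$. A decomposition of $\mathcal X$ over $A$ is a direct sum $\mathcal X=\mathcal X_1\oplus\cdots\oplus\mathcal X_r$ with $r>1$ and $A\mathcal X_i\subseteq\mathcal X_i$, $i\in\mathcal I=\{1,\dots,r\}$; $\rho_i:\mathcal X\to\mathcal X_i$ is the projection along the other summands. $\mathcal G_s$ is the set of $h:\mathcal X\to\mathbb R_{\ge0}$ with $h(x)=\sum_i h(\rho_i(x))$ for all $x$. Subproblem $(A,\rho_i\circ B,g,\alpha)$: the system $x_{i,t+1}=Ax_{i,t}+\rho_i(Bu_{i,t})$ with states in $\mathcal X_i$ and inputs in $\mathcal U$, policies $\pi_i(x_{i,0})\in\mathcal U^{\mathbb Z_+}$, cost $J_i(x_{i,0},\pi_i)=\sum_{t\ge0}\alpha^tg(x_{i,t})$, optimal cost $J_i^*$, optimal policies $\pi_i^*$ with components $\pi^*_{i,t}$; an optimal control law is $u_i^*:\mathcal X_i\to\mathcal U$ with $u_i^*(z)\in\operatorname{argmin}_uJ_i^*(Az+\rho_i(Bu))$. Definition 2: $\{(A,\rho_i\circ B,g,\alpha)\}_{i\in\mathcal I}$ is a decomposition of $(A,B,g,\alpha)$ if for every $x\in\mathcal X$: $J^*(x)=\sum_iJ_i^*(\rho_i(x))$, and for every choice of optimal policies $\pi_i^*(\rho_i(x))$ there is an optimal policy $\pi^*(x)$ of $(A,B,g,\alpha)$ with $B\pi_t^*(x)=\sum_{i}\rho_i\big(B\pi^*_{i,t}(\rho_i(x))\big)$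 for all $t\in\mathbb Z_+$. *)

From HB Require Import structures.
From mathcomp Require Import all_boot all_order all_algebra.
From Stdlib Require Import Reals.
Set Implicit Arguments. Unset Strict Implicit. Unset Printing Implicit Defensive.
Import GRing.Theory.
Local Open Scope ring_scope.

(* Costs live in [0, +oo]: extended nonnegative values. *)
Inductive ecost := Fin of R | Infty.

Definition ecost_le (a b : ecost) : Prop :=
  match a, b with
  | Fin x, Fin y => Rle x y
  | _, Infty => True
  | Infty, Fin _ => False
  end.

Definition ecost_add (a b : ecost) : ecost :=
  match a, b with
  | Fin x, Fin y => Fin (Rplus x y)
  | _, _ => Infty
  end.

Definition has_cost (s : nat -> R) (v : ecost) : Prop :=
  match v with
  | Fin c => Un_cv s c
  | Infty => forall M : R, exists n, Rlt M (s n)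
  end.

Section Sys.
Variables (F : fieldType) (X U : vectType F).

Fixpoint traj (f : X -> X) (b : U -> X) (x0 : X) (pi : nat -> U) (t : nat) : X :=
  match t with
  | 0 => x0
  | t'.+1 => f (traj f b x0 pi t') + b (pi t')
  end.

Fixpoint psum (g : X -> R) (alpha : R) (x : nat -> X) (n : nat) : R :=
  match n with
  | 0 => R0
  | n'.+1 => Rplus (psum g alpha x n') (Rmult (pow alpha n') (g (x n')))
  end.

Definition cost_is f b g alpha x0 pi (v : ecost) : Prop :=
  has_cost (psum g alpha (traj f b x0 pi)) v.

Definition Jstar_is f b g alpha x (v : ecost) : Prop :=
  (exists pi, cost_is f b g alpha x pi v) /\
  (forall pi w, cost_is f b g alpha x pi w -> ecost_le v w).

Definition optimal_policy f b g alpha x pi : Prop :=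
  exists v, Jstar_is f b g alpha x v /\ cost_is f b g alpha x pi v.

Definition argmin_Jstar f b g alpha (x : X) (u : U) : Prop :=
  forall u' v v', Jstar_is f b g alpha (f x + b u) v ->
    Jstar_is f b g alpha (f x + b u') v' -> ecost_le v v'.

Definition optimal_law f b g alpha (D : X -> Prop) (ustar : X -> U) : Prop :=
  forall x, D x -> argmin_Jstar f b g alpha x (ustar x).

Definition minima_attained f b g alpha (D : X -> Prop) : Prop :=
  (forall x, D x -> exists v, Jstar_is f b g alpha x v) /\
  (forall x, D x -> exists u, argmin_Jstar f b g alpha x u).

Definition decomposition_over r (Xs : 'I_r -> {vspace X}) (A : 'End(X)) : Prop :=
  is_true (leq 2 r) /\ (\sum_(i < r) Xs i)%VS = fullv /\ directv (\sum_(i < r) Xs i) /\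
  (forall i, (A @: Xs i <= Xs i)%VS).

Definition projections r (Xs : 'I_r -> {vspace X}) (rho : 'I_r -> 'End(X)) : Prop :=
  forall x, (forall i, rho i x \in Xs i) /\ x = \sum_(i < r) rho i x.

Definition cost_fun (g : X -> R) : Prop :=
  forall x, Rle R0 (g x) /\ (g x = R0 <-> x = 0).

Definition in_Gs r (rho : 'I_r -> 'End(X)) (g : X -> R) : Prop :=
  forall x, g x = \big[Rplus/R0]_(i < r) g (rho i x).

Definition is_decomposition_of r (rho : 'I_r -> 'End(X)) (A : 'End(X))
    (B : 'Hom(U, X)) (g : X -> R) (alpha : R) : Prop :=
  forall x : X,
    (forall (v : ecost) (vs : 'I_r -> ecost),
        Jstar_is A B g alpha x v ->
        (forall i, Jstar_is A (fun u => rho i (B u)) g alpha (rho i x) (vs i)) ->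
        v = \big[ecost_add/Fin R0]_(i < r) vs i) /\
    (forall pis : 'I_r -> nat -> U,
        (forall i, optimal_policy A (fun u => rho i (B u)) g alpha (rho i x) (pis i)) ->
        exists pi, optimal_policy A B g alpha x pi /\
          forall t, B (pi t) = \sum_(i < r) rho i (B (pis i t))).

End Sys.

(* Since g is additive over the summands and each rho_i commutes with A, the
   discounted cost of any policy pi from x is the sum of the subproblem costs of
   the same pi from the rho_i x.  Hence J*(x) >= sum_i J_i*(rho_i x), with
   equality as soon as optimal subpolicies can be merged, i.e. as soon as
   sum_i rho_i (B u_i) lies in the range of B at every step.  By the Bellman
   principle a control is optimal iff it is the first move of an optimal policy,
   and every move of an optimal policy is an optimal control at the state it
   reaches; this converts between policies and control laws in both directions
   of the equivalence. *)

From HB Require Import structures.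
From mathcomp Require Import all_boot all_order all_algebra.
From Stdlib Require Import Reals Lra Classical IndefiniteDescription.
Import GRing.Theory.

Set Implicit Arguments. Unset Strict Implicit. Unset Printing Implicit Defensive.

HB.instance Definition _ := Monoid.isComLaw.Build R R0 Rplus
  (fun x y z => esym (Rplus_assoc x y z)) Rplus_comm Rplus_0_l.

Section ExtendedCost.
Local Open Scope R_scope.

Definition ecost_affine (c a : R) (v : ecost) : ecost :=
  if v is Fin y then Fin (c + a * y) else Infty.

Lemma ecost_le_refl v : ecost_le v v.
Proof. by case: v => //= x; lra. Qed.

Lemma ecost_le_trans u v w : ecost_le u v -> ecost_le v w -> ecost_le u w.
Proof. by case: u; case: v; case: w => //= *; lra. Qed.

Lemma ecost_le_anti u v : ecost_le u v -> ecost_le v u -> u = v.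
Proof. by case: u; case: v => //= x y *; f_equal; lra. Qed.

Lemma ecost_affine_le c a v w : 0 < a ->
  ecost_le (ecost_affine c a v) (ecost_affine c a w) <-> ecost_le v w.
Proof.
move=> a_gt0; case: v; case: w => //= x y; split => le_xy.
- by apply: (Rmult_le_reg_l a) => //; lra.
- by have := Rmult_le_compat_l a _ _ (Rlt_le _ _ a_gt0) le_xy; lra.
Qed.

Lemma ecost_le_big r (v w : 'I_r -> ecost) : (forall i, ecost_le (v i) (w i)) ->
  ecost_le (\big[ecost_add/Fin R0]_(i < r) v i) (\big[ecost_add/Fin R0]_(i < r) w i).
Proof.
move=> le_vw; apply: (big_ind2 ecost_le) => //; first exact: ecost_le_refl.
by move=> [x1|] [y1|] [x2|] [y2|] //=; lra.
Qed.

End ExtendedCost.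

Section ExtendedSum.
Local Open Scope R_scope.

Lemma has_cost_growing s : Un_growing s -> exists v, has_cost s v.
Proof.
move=> s_grow; case: (classic (exists M, forall n, s n <= M)) => [[M s_le]|unbounded].
- have s_ub : has_ub s by exists M => y [n ->]; apply: s_le.
  by have [l s_cv] := growing_cv s s_grow s_ub; exists (Fin l).
- exists Infty => M /=; apply: NNPP => no_n; apply: unbounded; exists M => n.
  by apply: Rnot_lt_le => lt_Ms; apply: no_n; exists n.
Qed.

Lemma has_cost_unique s v w : Un_growing s -> has_cost s v -> has_cost s w -> v = w.
Proof.
have fin_infty c : Un_growing s -> Un_cv s c -> ~ forall M, exists n, M < s n.
  move=> s_grow s_cv s_unb; have [N s_near] := s_cv 1 Rlt_0_1.
  have [n lt_s] := s_unb (c + 1).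
  have := growing_prop s (Nat.max n N) n s_grow (Nat.le_max_l n N).
  move: (s_near _ (Nat.le_max_r n N)); rewrite /R_dist => /Rabs_def2; lra.
move=> s_grow; case: v => [x|]; case: w => [y|] //= sv sw.
- by rewrite (UL_sequence _ _ _ sv sw).
- by case: (fin_infty _ s_grow sv sw).
- by case: (fin_infty _ s_grow sw sv).
Qed.

Lemma has_cost_eq s s' v : s =1 s' -> has_cost s v -> has_cost s' v.
Proof.
move=> ss'; case: v => /= [c s_cv eps eps_gt0|s_unb M].
- by have [N s_near] := s_cv eps eps_gt0; exists N => n le_Nn; rewrite -ss'; apply: s_near.
- by have [n lt_s] := s_unb M; exists n; rewrite -ss'.
Qed.

Lemma has_cost_affine_shift s s' c a w : 0 < a ->
  (forall n, s n.+1 = c + a * s' n) -> has_cost s' w -> has_cost s (ecost_affine c a w).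
Proof.
move=> a_gt0 s_succ; case: w => /= [y s'_cv eps eps_gt0|s'_unb M].
- have [N s'_near] := s'_cv (eps / a) (Rdiv_lt_0_compat _ _ eps_gt0 a_gt0).
  exists N.+1 => [[|n] le_Nn]; first by inversion le_Nn.
  rewrite s_succ /R_dist.
  have -> : c + a * s' n - (c + a * y) = a * (s' n - y) by ring.
  rewrite Rabs_mult Rabs_right; last lra.
  have := Rmult_lt_compat_l a _ _ a_gt0 (s'_near n (le_S_n _ _ le_Nn)).
  by have -> : a * (eps / a) = eps by field; lra.
- have [n lt_s'] := s'_unb ((M - c) / a); exists n.+1; rewrite s_succ.
  have := Rmult_lt_compat_l a _ _ a_gt0 lt_s'.
  have -> : a * ((M - c) / a) = M - c by field; lra.
  lra.
Qed.

Lemma has_cost_add s1 s2 v1 v2 : (forall n, 0 <= s1 n) -> (forall n, 0 <= s2 n) ->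
  has_cost s1 v1 -> has_cost s2 v2 -> has_cost (fun n => s1 n + s2 n) (ecost_add v1 v2).
Proof.
move=> s1_ge0 s2_ge0; case: v1 => [x|]; case: v2 => [y|] /= s1v s2v.
- exact: CV_plus.
- by move=> M; have [n ?] := s2v M; exists n; have := s1_ge0 n; lra.
- by move=> M; have [n ?] := s1v M; exists n; have := s2_ge0 n; lra.
- by move=> M; have [n ?] := s1v M; exists n; have := s2_ge0 n; lra.
Qed.

Lemma has_cost_sum r (s : 'I_r -> nat -> R) (v : 'I_r -> ecost) :
  (forall i n, 0 <= s i n) -> (forall i, has_cost (s i) (v i)) ->
  has_cost (fun n => \big[Rplus/R0]_(i < r) s i n) (\big[ecost_add/Fin R0]_(i < r) v i).
Proof.
elim: r s v => [|r IHr] s v s_ge0 sv.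
- rewrite big_ord0; apply: (has_cost_eq (s := fun _ => R0)) => [n|eps eps_gt0].
    by rewrite big_ord0.
  by exists O => n _; rewrite /R_dist Rminus_diag Rabs_R0.
- rewrite big_ord_recl.
  apply: (has_cost_eq (s := fun n => s ord0 n + \big[Rplus/R0]_(i < r) s (lift ord0 i) n)).
    by move=> n; rewrite big_ord_recl.
  apply: has_cost_add; [by [] | move=> n | by [] | exact: IHr].
  by apply: (big_ind (Rle 0)) => [|x y|i _] //; lra.
Qed.

End ExtendedSum.

Section DynamicProgramming.
Variables (F : fieldType) (X U : vectType F) (f : X -> X) (b : U -> X)
  (g : X -> R) (alpha : R).
Hypothesis g_ge0 : forall x, Rle R0 (g x).
Hypothesis alpha_gt0 : Rlt R0 alpha.

Local Notation next x u := (GRing.add (f x) (b u)).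
Local Notation tail pi := (fun t => pi t.+1).

Definition pcons (u : U) (pi : nat -> U) : nat -> U :=
  fun t => if t is t'.+1 then pi t' else u.

Local Open Scope R_scope.

Lemma traj_succ x pi t : traj f b x pi t.+1 = traj f b (next x (pi O)) (tail pi) t.
Proof. by elim: t => //= t ->. Qed.

Lemma psum_succ x pi n :
  psum g alpha (traj f b x pi) n.+1 =
  g x + alpha * psum g alpha (traj f b (next x (pi O)) (tail pi)) n.
Proof.
elim: n => [|n IHn]; first by rewrite /=; ring.
have -> : psum g alpha (traj f b x pi) n.+2 =
  psum g alpha (traj f b x pi) n.+1 + pow alpha n.+1 * g (traj f b x pi n.+1) by [].
by rewrite IHn traj_succ /=; ring.
Qed.

Lemma psum_growing s : Un_growing (psum g alpha s).
Proof.
move=> n /=; have := Rmult_le_pos _ _ (Rlt_le _ _ (pow_lt _ n alpha_gt0)) (g_ge0 (s n)).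
lra.
Qed.

Lemma psum_ge0 s n : 0 <= psum g alpha s n.
Proof. by elim: n => [|n IHn] /=; [lra | have := psum_growing s n; simpl; lra]. Qed.

Lemma cost_exists x pi : exists v, cost_is f b g alpha x pi v.
Proof. exact: has_cost_growing (psum_growing _). Qed.

Lemma cost_unique x pi v w :
  cost_is f b g alpha x pi v -> cost_is f b g alpha x pi w -> v = w.
Proof. exact: has_cost_unique (psum_growing _). Qed.

Lemma cost_succ x pi w :
  cost_is f b g alpha (next x (pi O)) (tail pi) w ->
  cost_is f b g alpha x pi (ecost_affine (g x) alpha w).
Proof. by apply: has_cost_affine_shift => // n; rewrite psum_succ. Qed.

Lemma Jstar_unique x v w :
  Jstar_is f b g alpha x v -> Jstar_is f b g alpha x w -> v = w.
Proof.
move=> [[p1 c1] v_min] [[p2 c2] w_min].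
by apply: ecost_le_anti; [exact: v_min c2 | exact: w_min c1].
Qed.

Lemma Jstar_le_succ x u v w :
  Jstar_is f b g alpha x v -> Jstar_is f b g alpha (next x u) w ->
  ecost_le v (ecost_affine (g x) alpha w).
Proof. by move=> [_ v_min] [[p cp] _]; apply: (v_min (pcons u p)); apply: cost_succ. Qed.

Lemma optimal_policy_exists x v :
  Jstar_is f b g alpha x v -> exists pi, optimal_policy f b g alpha x pi.
Proof. by move=> Jv; have [[pi cpi] _] := Jv; exists pi, v. Qed.

Lemma optimal_policy_succ x pi :
  (exists w, Jstar_is f b g alpha (next x (pi O)) w) ->
  optimal_policy f b g alpha x pi ->
  argmin_Jstar f b g alpha x (pi O) /\
  optimal_policy f b g alpha (next x (pi O)) (tail pi).
Proof.
move=> [w Jw] [v [Jv cv]].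
have [w' cw'] := cost_exists (next x (pi O)) (tail pi).
have v_eq : v = ecost_affine (g x) alpha w' := cost_unique cv (cost_succ cw').
have le_ww' : ecost_le w w' := proj2 Jw _ _ cw'.
have le_w'_Jstar w1 u : Jstar_is f b g alpha (next x u) w1 -> ecost_le w' w1.
  move=> Jw1; apply/(ecost_affine_le (g x) _ _ alpha_gt0); rewrite -v_eq.
  exact: Jstar_le_succ Jv Jw1.
split.
- move=> u w1 w2 Jw1 Jw2; rewrite (Jstar_unique Jw1 Jw).
  exact: ecost_le_trans le_ww' (le_w'_Jstar _ _ Jw2).
- by exists w; split; rewrite // (ecost_le_anti le_ww' (le_w'_Jstar _ _ Jw)).
Qed.

Lemma optimal_policy_cons x u p :
  (forall u', exists w, Jstar_is f b g alpha (next x u') w) ->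
  argmin_Jstar f b g alpha x u ->
  optimal_policy f b g alpha (next x u) p ->
  optimal_policy f b g alpha x (pcons u p).
Proof.
move=> Jnext u_min [w [Jw cw]].
have c_cons : cost_is f b g alpha x (pcons u p) (ecost_affine (g x) alpha w).
  exact: cost_succ.
exists (ecost_affine (g x) alpha w); split => //; split; first by exists (pcons u p).
move=> pi c c_pi.
have [w0 Jw0] := Jnext (pi O).
have [ct c_tail] := cost_exists (next x (pi O)) (tail pi).
rewrite (cost_unique c_pi (cost_succ c_tail)) ecost_affine_le //.
exact: ecost_le_trans (u_min _ _ _ Jw Jw0) (proj2 Jw0 _ _ c_tail).
Qed.

Section Domain.
Variable D : X -> Prop.
Hypothesis D_next : forall z u, D z -> D (next z u).
Hypothesis D_min : minima_attained f b g alpha D.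

Lemma optimal_policy_argmin_traj t z pi : D z ->
  optimal_policy f b g alpha z pi -> argmin_Jstar f b g alpha (traj f b z pi t) (pi t).
Proof.
elim: t z pi => [|t IHt] z pi Dz pi_opt;
  have [pi0_min tail_opt] := optimal_policy_succ (proj1 D_min _ (D_next (pi O) Dz)) pi_opt.
- exact: pi0_min.
- by rewrite traj_succ; apply: IHt tail_opt; apply: D_next.
Qed.

Lemma optimal_policy_of_law us z : optimal_law f b g alpha D us -> D z ->
  exists p, optimal_policy f b g alpha z (pcons (us z) p).
Proof.
move=> us_opt Dz.
have [w Jw] := proj1 D_min _ (D_next (us z) Dz).
have [p p_opt] := optimal_policy_exists Jw.
exists p; apply: optimal_policy_cons p_opt; last exact: us_opt.
by move=> u'; apply: (proj1 D_min); apply: D_next.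
Qed.

Lemma optimal_law_through z0 u0 : argmin_Jstar f b g alpha z0 u0 ->
  exists us, optimal_law f b g alpha D us /\ us z0 = u0.
Proof.
move=> u0_min.
have [ch ch_min] : exists ch : X -> U, forall y, D y -> argmin_Jstar f b g alpha y (ch y).
  apply: (functional_choice (fun y u => D y -> argmin_Jstar f b g alpha y u)) => y.
  case: (classic (D y)) => [/(proj2 D_min) [u u_min] | nDy]; first by exists u.
  by exists (GRing.zero : U).
exists (fun y => if y == z0 then u0 else ch y); split; last by rewrite eqxx.
by move=> y Dy; case: eqP => [->|_]; [exact: u0_min | exact: ch_min].
Qed.

End Domain.
End DynamicProgramming.

Section Projections.
Local Open Scope ring_scope.
Variables (F : fieldType) (X : vectType F) (A : 'End(X)) (r : nat)
  (Xs : 'I_r -> {vspace X}) (rho : 'I_r -> 'End(X)).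
Hypothesis Xs_dec : decomposition_over Xs A.
Hypothesis rho_proj : projections Xs rho.

Lemma proj_mem i x : rho i x \in Xs i.
Proof. by case: (rho_proj x). Qed.

Lemma sum_proj x : \sum_(k < r) rho k x = x.
Proof. by case: (rho_proj x). Qed.

Lemma proj_sum_mem (a : 'I_r -> X) : (forall k, a k \in Xs k) ->
  forall i, rho i (\sum_(k < r) a k) = a i.
Proof.
move=> a_mem i; have [_ [_ [Xs_direct _]]] := Xs_dec.
set s := \sum_(k < r) a k; apply/eqP; rewrite -subr_eq0; apply/eqP.
apply: (directv_sum_independent Xs_direct (fun k => rho k s - a k)) => // [k _|].
  by rewrite memvB ?proj_mem.
by rewrite sumrB sum_proj subrr.
Qed.

Lemma proj_sum_proj i (w : 'I_r -> X) : rho i (\sum_(j < r) rho j (w j)) = rho i (w i).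
Proof. by rewrite proj_sum_mem // => k; apply: proj_mem. Qed.

Lemma endo_mem i z : z \in Xs i -> A z \in Xs i.
Proof.
have [_ [_ [_ A_inv]]] := Xs_dec.
by move=> z_mem; apply: (subvP (A_inv i)); apply: memv_img.
Qed.

Lemma endo_add_proj_mem i z y : z \in Xs i -> A z + rho i y \in Xs i.
Proof. by move=> z_mem; rewrite memvD ?proj_mem ?endo_mem. Qed.

Lemma proj_endo i x : rho i (A x) = A (rho i x).
Proof.
rewrite -{1}(sum_proj x) linear_sum proj_sum_mem // => k.
by rewrite endo_mem ?proj_mem.
Qed.

End Projections.

Section Decomposition.
Local Open Scope ring_scope.
Variables (F : fieldType) (X U : vectType F) (A : 'End(X)) (B : 'Hom(U, X))
  (r : nat) (Xs : 'I_r -> {vspace X}) (rho : 'I_r -> 'End(X)) (g : X -> R) (alpha : R).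
Hypothesis Xs_dec : decomposition_over Xs A.
Hypothesis rho_proj : projections Xs rho.
Hypothesis g_ge0 : forall x, Rle R0 (g x).
Hypothesis g_sep : in_Gs rho g.
Hypothesis alpha_gt0 : Rlt R0 alpha.
Hypothesis min_full : minima_attained A B g alpha (fun _ => True).
Hypothesis min_sub :
  forall i, minima_attained A (fun u => rho i (B u)) g alpha (fun z => z \in Xs i).

Local Notation Bi i := (fun u => rho i (B u)).
Local Notation agree pi pis := (forall i t, rho i (B (pi t)) = rho i (B (pis i t))).

Lemma traj_proj x pi (pis : 'I_r -> nat -> U) : agree pi pis ->
  forall i t, rho i (traj A B x pi t) = traj A (Bi i) (rho i x) (pis i) t.
Proof.
move=> pi_pis i; elim=> //= t IHt.
by rewrite linearD /= (proj_endo Xs_dec rho_proj) IHt pi_pis.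
Qed.

Lemma sub_next_mem i z u : z \in Xs i -> A z + rho i (B u) \in Xs i.
Proof. exact: endo_add_proj_mem. Qed.

Lemma traj_mem i z pi t : z \in Xs i -> traj A (Bi i) z pi t \in Xs i.
Proof. by move=> z_mem; elim: t => //= t; apply: sub_next_mem. Qed.

Lemma cost_sum_proj x pi (pis : 'I_r -> nat -> U) (c : 'I_r -> ecost) : agree pi pis ->
  (forall i, cost_is A (Bi i) g alpha (rho i x) (pis i) (c i)) ->
  cost_is A B g alpha x pi (\big[ecost_add/Fin R0]_(i < r) c i).
Proof.
move=> pi_pis c_pis.
have psum_sum n : psum g alpha (traj A B x pi) n =
    \big[Rplus/R0]_(i < r) psum g alpha (traj A (Bi i) (rho i x) (pis i)) n.
  elim: n => [|n IHn] /=; first by rewrite big1.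
  rewrite IHn g_sep (big_morph (Rmult _) (Rmult_plus_distr_l _) (Rmult_0_r _)) -big_split.
  by apply: eq_bigr => i _; rewrite (traj_proj x pi_pis).
apply: (has_cost_eq _ (has_cost_sum _ c_pis)) => [n|i n]; first by rewrite psum_sum.
exact: psum_ge0.
Qed.

Lemma Jstar_ge_sum x v (vs : 'I_r -> ecost) :
  Jstar_is A B g alpha x v ->
  (forall i, Jstar_is A (Bi i) g alpha (rho i x) (vs i)) ->
  ecost_le (\big[ecost_add/Fin R0]_(i < r) vs i) v.
Proof.
move=> [[pi c_pi] _] Jvs.
have [c c_proj] :=
  functional_choice _ (fun i => cost_exists A (Bi i) g_ge0 alpha_gt0 (rho i x) pi).
have c_sum := cost_sum_proj (pis := fun _ => pi) (fun _ _ => erefl) c_proj.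
rewrite (cost_unique g_ge0 alpha_gt0 c_pi c_sum).
by apply: ecost_le_big => i; apply: (proj2 (Jvs i)).
Qed.

Lemma merge_optimal_policies x v (pis : 'I_r -> nat -> U) :
  Jstar_is A B g alpha x v ->
  (forall i, optimal_policy A (Bi i) g alpha (rho i x) (pis i)) ->
  (forall t, exists u, B u = \sum_(j < r) rho j (B (pis j t))) ->
  (exists pi, optimal_policy A B g alpha x pi /\
     forall t, B (pi t) = \sum_(j < r) rho j (B (pis j t))) /\
  forall vs : 'I_r -> ecost, (forall i, Jstar_is A (Bi i) g alpha (rho i x) (vs i)) ->
    v = \big[ecost_add/Fin R0]_(i < r) vs i.
Proof.
move=> Jv pis_opt realizable.
have [pi B_pi] := functional_choice _ realizable.
have pi_pis : agree pi pis by move=> i t; rewrite B_pi (proj_sum_proj Xs_dec rho_proj).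
have [w w_opt] := functional_choice _ pis_opt.
have c_pi := cost_sum_proj pi_pis (fun i => proj2 (w_opt i)).
have v_eq := ecost_le_anti (proj2 Jv _ _ c_pi) (Jstar_ge_sum Jv (fun i => proj1 (w_opt i))).
split; first by exists pi; split => //; exists v; split; rewrite // v_eq.
move=> vs Jvs; rewrite v_eq; apply: eq_bigr => i _.
exact: Jstar_unique (proj1 (w_opt i)) (Jvs i).
Qed.

Definition merging_laws_exist : Prop :=
  forall us : 'I_r -> X -> U,
    (forall i, optimal_law A (Bi i) g alpha (fun z => z \in Xs i) (us i)) ->
    exists ustar : X -> U, optimal_law A B g alpha (fun _ => True) ustar /\
      forall x i, rho i (A x + B (ustar x)) = A (rho i x) + rho i (B (us i (rho i x))).

Lemma merged_input_realizable x (pis : 'I_r -> nat -> U) : merging_laws_exist ->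
  (forall i, optimal_policy A (Bi i) g alpha (rho i x) (pis i)) ->
  forall t, exists u, B u = \sum_(j < r) rho j (B (pis j t)).
Proof.
move=> merge pis_opt t.
pose z i := traj A (Bi i) (rho i x) (pis i) t.
have z_mem i : z i \in Xs i by apply: traj_mem; apply: proj_mem.
have z_min i : argmin_Jstar A (Bi i) g alpha (z i) (pis i t).
  exact: (optimal_policy_argmin_traj g_ge0 alpha_gt0 (@sub_next_mem i) (min_sub i)
            (proj_mem rho_proj i x) (pis_opt i)).
have [us us_spec] := functional_choice _ (fun i => optimal_law_through (min_sub i) (z_min i)).
have [ustar [_ ustar_proj]] := merge us (fun i => proj1 (us_spec i)).
set s := \sum_(j < r) z j.
have rho_s i : rho i s = z i by apply: (proj_sum_mem Xs_dec rho_proj).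
exists (ustar s); apply: (addrI (A s)); rewrite -[LHS](sum_proj rho_proj).
under eq_bigr => i _ do rewrite ustar_proj rho_s (proj2 (us_spec i)).
by rewrite big_split /= -linear_sum.
Qed.

Lemma decomposition_of_laws : merging_laws_exist -> is_decomposition_of rho A B g alpha.
Proof.
move=> merge x; split.
- move=> v vs Jv Jvs.
  have [pis pis_opt] := functional_choice _ (fun i => optimal_policy_exists (Jvs i)).
  exact: (proj2 (merge_optimal_policies Jv pis_opt (merged_input_realizable merge pis_opt))).
- move=> pis pis_opt; have [v Jv] := proj1 min_full x I.
  exact: (proj1 (merge_optimal_policies Jv pis_opt (merged_input_realizable merge pis_opt))).
Qed.

Lemma laws_of_decomposition : is_decomposition_of rho A B g alpha -> merging_laws_exist.
Proof.
move=> dec us us_opt.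
have first_move x : exists u, argmin_Jstar A B g alpha x u /\
    B u = \sum_(j < r) rho j (B (us j (rho j x))).
  have [p p_opt] := functional_choice _ (fun i =>
    optimal_policy_of_law g_ge0 alpha_gt0 (@sub_next_mem i)
      (min_sub i) (us_opt i) (proj_mem rho_proj i x)).
  have [pi [pi_opt B_pi]] := proj2 (dec x) (fun i => pcons (us i (rho i x)) (p i)) p_opt.
  exists (pi O); split; last exact: B_pi O.
  exact: (proj1 (optimal_policy_succ g_ge0 alpha_gt0 (proj1 min_full _ I) pi_opt)).
have [ustar ustar_spec] := functional_choice _ first_move.
exists ustar; split => [x _|x i]; first exact: (proj1 (ustar_spec x)).
rewrite linearD /= (proj_endo Xs_dec rho_proj) (proj2 (ustar_spec x)).
by rewrite (proj_sum_proj Xs_dec rho_proj).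
Qed.

End Decomposition.

Unset Implicit Arguments.
Local Open Scope ring_scope.

Theorem lemma4 (F : fieldType) (X U : vectType F) (A : 'End(X)) (B : 'Hom(U, X))
  (r : nat) (Xs : 'I_r -> {vspace X}) (rho : 'I_r -> 'End(X)) (g : X -> R) (alpha : R) :
  injective B ->
  decomposition_over Xs A ->
  projections Xs rho ->
  cost_fun g ->
  in_Gs rho g ->
  Rlt R0 alpha -> Rlt alpha R1 ->
  minima_attained A B g alpha (fun _ => True) ->
  (forall i, minima_attained A (fun u => rho i (B u)) g alpha (fun z => z \in Xs i)) ->
  (is_decomposition_of rho A B g alpha <->
   (forall us : 'I_r -> X -> U,
      (forall i, optimal_law A (fun u => rho i (B u)) g alpha (fun z => z \in Xs i) (us i)) ->
      exists ustar : X -> U,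
        optimal_law A B g alpha (fun _ => True) ustar /\
        (forall x i, rho i (A x + B (ustar x)) = A (rho i x) + rho i (B (us i (rho i x)))))).
Proof.
move=> _ Xs_dec rho_proj g_cost g_sep alpha_gt0 _ min_full min_sub.
have g_ge0 x : Rle R0 (g x) by case: (g_cost x).
split.
- exact: laws_of_decomposition.
- exact: decomposition_of_laws.
Qed.
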